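(* Consider the Distributed Guided Local Search (DGLS) algorithm described in the context, run with an evaporation rate $0<\gamma<1$, with either manner (additive or multiplicative) and any update scope (cell, table, row or column). Then at every round, every entry of every cost modifier $M_{ij}$ maintained by any agent is bounded above by $1/(1-\gamma)$.
   Context: A (binary) Distributed Constraint Optimization Problem (DCOP) consists of agents $1,\dots,n$, each controlling one variable $x_i$ with finite domain $D_i$, and binary constraint functions $f_{ij}:D_i\times D_j\to\mathbb{R}_{\ge0}$ with $f_{ji}=f_{ij}^T$; $\mathcal{N}_i$ is the set of neighbors of $i$ (agents sharing a constraint with $i$). Write $\check f_{ij}=\min_{d_i,d_j} f_{ij}(d_i,d_j)$, $\hat f_{ij}=\max_{d_i,d_j} f_{ij}(d_i,d_j)$. DGLS (Distributed Guided Local Search) is parameterized by a manner (additive $A$ or multiplicative $M$), an evaporation rate $\gamma$, and a scope ($cel$, $tab$, $row$, $col$). Each agent $i$ keeps, for each $j\in\mathcal{N}_i$, a cost modifier $M_{ij}$ (a $|D_i|\times|D_j|$ real matrix), initialized to $0$. The effective cost is $\mathrm{EffCost}(d_i,j,d_j)=f_{ij}(d_i,d_j)+M_{ij}(d_i,d_j)$ (additive) or $f_{ij}(d_i,d_j)\cdot[1+M_{ij}(d_i,d_j)]$ (multiplicative). Initially each agent picks a random value $d_i\in D_i$ and sends it to its neighbors. Rounds are synchronous; in each round agent $i$: (1) sets $\bar P_i=\emptyset$ and receives the neighbors' current values $d_j$; (2) computes $d_i^*\in\arg\min_{d\in D_i}\sum_{j\in\mathcal{N}_i}\mathrm{EffCost}(d,j,d_j)$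 and gain $\Delta_i=\sum_{j}[\mathrm{EffCost}(d_i,j,d_j)-\mathrm{EffCost}(d_i^*,j,d_j)]$, and exchanges gains with neighbors; (3) if $\Delta_i>0$ and $\Delta_i$ is the best improvement among itself and its neighbors, it sets $d_i\gets d_i^*$; otherwise, if no neighbor can improve (all neighbors' gains are $\le 0$), then for each $j\in\mathcal{N}_i$ it declares $f_{ij}$ violated with probability $\eta=\frac{f_{ij}(d_i,d_j)-\check f_{ij}}{\hat f_{ij}-\check f_{ij}}$, and for each violated one adds $j$ to $\bar P_i$ and sends a SYNC message to $j$; (4) lets $\tilde P_i$ be the set of neighbors from which it received SYNC this round; (5) for each $j\in\mathcal{N}_i$: first evaporates, $M_{ij}\gets\gamma M_{ij}$ entrywise, then updates with current values $d_i,d_j$: scope $cel$: if $j\in\bar P_i\cup\tilde P_i$, $M_{ij}(d_i,d_j)\mathrel{+}=1$; scope $tab$: if $j\in\bar P_i\cup\tilde P_i$, all entries of $M_{ij}$ are increased by 1; scope $row$: if $j\in\bar P_i$, $M_{ij}(d_i,d_j')\mathrel{+}=1$ for all $d_j'$; if $j\in\tilde P_i$, $M_{ij}(d_i',d_j)\mathrel{+}=1$ for all $d_i'$; if $j\in\bar P_i\cap\tilde P_i$, $M_{ij}(d_i,d_j)\mathrel{-}=1$; scope $col$: same as $row$ with the roles of the two updates exchanged (if $j\in\bar P_i$ increment column $d_j$, if $j\in\tilde P_i$ increment row $d_i$, and subtract 1 at $(d_i,d_j)$ if both); (6) sends its value $d_i$ to its neighbors. *)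

From HB Require Import structures.
From mathcomp Require Import all_boot all_order all_algebra.
Set Implicit Arguments. Unset Strict Implicit. Unset Printing Implicit Defensive.
Import Order.TTheory GRing.Theory Num.Theory.
Local Open Scope ring_scope.

Record DCOP (R : realFieldType) := {
  nag : nat;
  dom : 'I_nag -> nat;
  adj : rel 'I_nag;
  #[canonical=no] cf  : forall i j : 'I_nag, 'I_(dom i) -> 'I_(dom j) -> R;
  adj_sym : forall i j : 'I_nag, adj i j = adj j i;
  adj_irr : forall i : 'I_nag, ~~ adj i i;
  cf_ge0 : forall (i j : 'I_nag) (a : 'I_(dom i)) (b : 'I_(dom j)), 0 <= @cf i j a b;
  cf_sym : forall (i j : 'I_nag) (a : 'I_(dom i)) (b : 'I_(dom j)),
             @cf j i b a = @cf i j a b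
}.

Arguments nag {R} d.
Arguments dom {R} d _.
Arguments adj {R} d _ _.
Arguments cf {R} d i j _ _.

Inductive manner := Additive | Multiplicative.
Inductive scope := Cel | Tab | Row | Col.

(* State of the system at the beginning of a round: current values d_i and
   cost modifiers M_ij (only those with adj i j are used / maintained). *)
Record state (R : realFieldType) (P : DCOP R) := {
  vals : forall i : 'I_(nag P), 'I_(dom P i);
  mods : forall i j : 'I_(nag P), 'M[R]_(dom P i, dom P j)
}.

Unset Implicit Arguments.
Section DGLS.
Variables (R : realFieldType) (P : DCOP R).
Local Notation I := 'I_(nag P).

Definition effcost (mn : manner) (fv mv : R) : R :=
  match mn with
  | Additive => fv + mv
  | Multiplicative => fv * (1 + mv)
  end.

Definition localcost (mn : manner) (s : state P) (i : I) (d : 'I_(dom P i)) : R :=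
  \sum_(j : I | adj P i j)
     effcost mn (cf P i j d (vals s j)) (mods s i j d (vals s j)).

Definition gain (mn : manner) (s : state P) (i : I) (dstar : 'I_(dom P i)) : R :=
  localcost mn s i (vals s i) - localcost mn s i dstar.

(* check f_ij and hat f_ij (a, b are any points of the domain, used only as
   the seed of the finite min/max; the result does not depend on them) *)
Definition fmin (i j : I) (a : 'I_(dom P i)) (b : 'I_(dom P j)) : R :=
  \big[Num.min/cf P i j a b]_(p : 'I_(dom P i) * 'I_(dom P j)) cf P i j p.1 p.2.
Definition fmax (i j : I) (a : 'I_(dom P i)) (b : 'I_(dom P j)) : R :=
  \big[Num.max/cf P i j a b]_(p : 'I_(dom P i) * 'I_(dom P j)) cf P i j p.1 p.2.

Definition eta (i j : I) (a : 'I_(dom P i)) (b : 'I_(dom P j)) : R :=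
  (cf P i j a b - fmin i j a b) / (fmax i j a b - fmin i j a b).

(* step (5): evaporation then scope update; inP = (j \in Pbar_i),
   inT = (j \in Ptilde_i), (a, b) = current (d_i, d_j). *)
Definition update (sc : scope) (gamma : R) (inP inT : bool) (m k : nat)
    (a : 'I_m) (b : 'I_k) (M : 'M[R]_(m, k)) : 'M[R]_(m, k) :=
  \matrix_(x < m, y < k)
    (gamma * M x y +
     match sc with
     | Cel => ((inP || inT) && (x == a) && (y == b))%:R
     | Tab => (inP || inT)%:R
     | Row => (inP && (x == a))%:R + (inT && (y == b))%:R
              - (inP && inT && (x == a) && (y == b))%:R
     | Col => (inP && (y == b))%:R + (inT && (x == a))%:R
              - (inP && inT && (x == a) && (y == b))%:R
     end).

Definition initial (s : state P) : Prop := forall i j, mods s i j = 0.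

(* One synchronous round of DGLS, as a relation between the state before and
   after the round; all random / unspecified choices (argmin ties, tie-breaking
   among equal best gains, outcomes of the violation coins) are existentially
   quantified, constrained to be outcomes the algorithm can produce. *)
Definition step (mn : manner) (sc : scope) (gamma : R) (s s' : state P) : Prop :=
  exists (dstar : forall i : I, 'I_(dom P i)) (move : pred I) (Pbar : I -> pred I),
    let Delta := fun i : I => gain mn s i (dstar i) in
    let quiet := fun i : I => ~~ move i /\ (forall k, adj P i k -> Delta k <= 0) in
    (forall i d, localcost mn s i (dstar i) <= localcost mn s i d) /\
    (forall i, move i -> 0 < Delta i /\ forall j, adj P i j -> Delta j <= Delta i) /\
    (forall i, 0 < Delta i -> (forall j, adj P i j -> Delta j < Delta i) -> move i) /\
    (* (3) violation declarations, only by non-moving agents none of whose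
           neighbours can improve, with probability eta (so possible only
           when eta > 0, and non-declaration possible only when eta < 1) *)
    (forall i j, Pbar i j ->
       [/\ adj P i j, quiet i & 0 < eta i j (vals s i) (vals s j)]) /\
    (forall i j, adj P i j -> quiet i -> ~~ Pbar i j ->
       eta i j (vals s i) (vals s j) < 1) /\
    (forall i, vals s' i = if move i then dstar i else vals s i) /\
    (* (4),(5) Ptilde_i = {j | i \in Pbar_j}; modifier updates *)
    (forall i j, mods s' i j =
       if adj P i j then
         update sc gamma (Pbar i j) (Pbar j i) (dom P i) (dom P j) (vals s' i) (vals s j) (mods s i j)
       else mods s i j).

End DGLS.
Set Implicit Arguments.
Arguments initial {R P}.
Arguments step {R P}.

From mathcomp Require Import all_boot all_order all_algebra.
From mathcomp Require Import ring lra.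
Set Implicit Arguments. Unset Strict Implicit.
Import Order.TTheory GRing.Theory Num.Theory.
Local Open Scope ring_scope.

(* Each round multiplies every entry by [gamma] and then adds at most [1] to
   it (for the row and column scopes, the subtracted cell keeps the crossing
   point of the incremented row and column at [+1]).  Hence any [c] with
   [gamma c + 1 <= c] that bounds the modifiers keeps bounding them; the least
   such [c] is [1 / (1 - gamma)], and it bounds the initial zero modifiers. *)

Section Update.
Variables (R : realFieldType) (sc : scope) (gamma : R) (inP inT : bool).
Variables (m k : nat) (a : 'I_m) (b : 'I_k) (M : 'M[R]_(m, k)).

Lemma update_le_evap_add1 x y :
  update R sc gamma inP inT m k a b M x y <= gamma * M x y + 1.
Proof.
rewrite mxE lerD2l.
by case: sc; case: inP; case: inT; case: (x == a); case: (y == b) => /=; lra.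
Qed.

End Update.

Lemma evaporation_fixpoint (R : realFieldType) (gamma : R) :
  gamma < 1 -> gamma * (1 / (1 - gamma)) + 1 = 1 / (1 - gamma).
Proof. by move=> hg1; field; rewrite subr_eq0 gt_eqF. Qed.

Section Invariant.
Variables (R : realFieldType) (P : DCOP R) (mn : manner) (sc : scope).
Variables (gamma c : R).
Hypotheses (hg0 : 0 <= gamma) (hc : gamma * c + 1 <= c).

Definition mods_le (s : state P) : Prop :=
  forall i j (x : 'I_(dom P i)) (y : 'I_(dom P j)), mods s i j x y <= c.

Lemma step_mods_le (s s' : state P) :
  step mn sc gamma s s' -> mods_le s -> mods_le s'.
Proof.
move=> [dstar [move [Pbar [_ [_ [_ [_ [_ [_ hmods]]]]]]]]] hs i j x y.
rewrite hmods; case: ifP => _; last exact: hs.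
apply: le_trans (update_le_evap_add1 sc gamma (Pbar i j) (Pbar j i) _ _ _ x y) _.
by apply: le_trans hc; rewrite lerD2r ler_wpM2l.
Qed.

End Invariant.

Theorem theorem1 (R : realFieldType) (P : DCOP R) (mn : manner) (sc : scope)
  (gamma : R) (hg0 : 0 < gamma) (hg1 : gamma < 1)
  (run : nat -> state P)
  (hinit : initial (run 0%N))
  (hstep : forall t : nat, step mn sc gamma (run t) (run t.+1)) :
  forall (t : nat) (i j : 'I_(nag P)), adj P i j ->
  forall (a : 'I_(dom P i)) (b : 'I_(dom P j)),
    mods (run t) i j a b <= 1 / (1 - gamma).
Proof.
have hc : gamma * (1 / (1 - gamma)) + 1 <= 1 / (1 - gamma).
  by rewrite evaporation_fixpoint.
have hinv t : mods_le (1 / (1 - gamma)) (run t).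
  elim: t => [|t IH]; last exact: (step_mods_le (ltW hg0) hc (hstep t)) IH.
  by move=> i j x y; rewrite hinit mxE divr_ge0 // subr_ge0 ltW.
by move=> t i j _; apply: hinv.
Qed.
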